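(* Let $K$ be a clique simplicial complex, $X\cup Y=K_0$ a cover of its vertex set, $A:=X\cap Y$, and $P:=\{\sigma\in K\mid\sigma\subset X\text{ or }\sigma\subset Y\text{ or }\sigma\cap A\neq\emptyset\}$. Assume there are two elements $a_X,a_Y\in A$ such that: (i) for every edge $\tau\in K_1$ with $|\tau\cap A|=1$ and $|\tau\cap(X\setminus A)|=1$, the set $\tau\cup\{a_X\}$ is a simplex of $K$; (ii) for every edge $\tau\in K_1$ with $|\tau\cap A|=1$ and $|\tau\cap(Y\setminus A)|=1$, the set $\tau\cup\{a_Y\}$ is a simplex of $K$; (iii) for every edge $\tau\in K_1\setminus P$, the set $\tau\cup\{a_X,a_Y\}$ is a simplex of $K$. Then for every $\sigma\in K\setminus P$, the set $\{a_X,a_Y\}$ is a central simplex of $\mathrm{St}(\sigma,A)$, and the inclusion $K_X\cup K_Y\subset K$ is a weak equivalence.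
   Context: A simplicial complex is a collection of finite nonempty subsets of a fixed set closed under taking nonempty subsets; $K_0$ is its vertex set, $K_1$ its set of edges, $K_B$ the subcomplex of simplices contained in $B$. $K$ is clique if a set with at least two elements is a simplex iff all its two-element subsets are simplices. $\mathrm{St}(\sigma,A):=\{\mu\subset A\mid 0<|\mu|<\infty,\ \mu\cup\sigma\in K\}$. A simplex $\tau$ of a complex $L$ is central if $\sigma\cup\tau\in L$ for every simplex $\sigma$ of $L$. Homotopical notions refer to geometric realizations. *)

From HB Require Import structures.
From mathcomp Require Import all_boot all_order all_algebra.
From mathcomp Require Import finmap.
From mathcomp Require Import all_classical all_reals all_analysis.
Set Implicit Arguments. Unset Strict Implicit. Unset Printing Implicit Defensive.
Import Order.TTheory GRing.Theory Num.Theory.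
Import numFieldNormedType.Exports.
Local Open Scope classical_set_scope.
Local Open Scope ring_scope.

Section Complexes.
Variable V : choiceType.

Definition is_complex (K : set {fset V}) : Prop :=
  (forall s, K s -> s != fset0) /\
  (forall s t, K s -> fsubset t s -> t != fset0 -> K t).

Definition is_clique (K : set {fset V}) : Prop :=
  forall s : {fset V}, (2 <= #|` s|)%N ->
    (K s <-> forall u w, u \in s -> w \in s -> u != w -> K [fset u; w]%fset).

Definition vertices (K : set {fset V}) : set V := [set v | K [fset v]%fset].

Definition edge (K : set {fset V}) (t : {fset V}) : Prop := K t /\ #|` t| = 2%N.

Definition fsub_in (s : {fset V}) (B : set V) : Prop := forall x, x \in s -> B x.

Definition full_sub (K : set {fset V}) (B : set V) : set {fset V} :=
  [set s | K s /\ fsub_in s B].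

Definition card_in (t : {fset V}) (B : set V) : nat := #|` [fset x in t | `[< B x >]]%fset|.

Definition St (K : set {fset V}) (sigma : {fset V}) (A : set V) : set {fset V} :=
  [set mu | mu != fset0 /\ fsub_in mu A /\ K (fsetU mu sigma)].

Definition central (L : set {fset V}) (tau : {fset V}) : Prop :=
  L tau /\ forall s, L s -> L (fsetU s tau).

Definition Pset (K : set {fset V}) (X Y : set V) : set {fset V} :=
  [set s | K s /\ (fsub_in s X \/ fsub_in s Y \/ exists a, a \in s /\ (X `&` Y) a)].

(** Geometric realization.  Points of |K| are functions alpha : V -> R
    (barycentric coordinates) supported on a simplex, nonnegative, summing to 1. *)
Variable R : realType.

Definition closed_simplex (S : {fset V}) : set (V -> R) :=
  [set alpha | (forall v, v \notin S -> alpha v = 0) /\ (forall v, 0 <= alpha v) /\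
               \sum_(v <- S) alpha v = 1].

Definition realization (K : set {fset V}) : set (V -> R) :=
  [set alpha | exists S, K S /\ closed_simplex S alpha].

(* open sets of the weak (CW / coherent) topology on |K|: U is open iff its
   trace on every closed simplex |S| is open for the Euclidean topology of |S| *)
Definition weak_open (K : set {fset V}) (U : set (V -> R)) : Prop :=
  U `<=` realization K /\
  forall S, K S -> forall alpha, closed_simplex S alpha -> U alpha ->
    exists2 e : R, 0 < e & forall beta, closed_simplex S beta ->
      (forall v, v \in S -> `|beta v - alpha v| < e) -> U beta.

(* f : T -> (V -> R), defined on D, is a continuous map D -> |K|
   (D with the subspace topology of T, |K| with the weak topology) *)
Definition cont_into {T : topologicalType} (K : set {fset V}) (D : set T)
    (f : T -> V -> R) : Prop :=
  (forall t, D t -> realization K (f t)) /\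
  forall U, weak_open K U -> exists O : set T, open O /\ O `&` D = f @^-1` U `&` D.

Definition cube (n : nat) : set 'rV[R]_n := [set x | forall i, 0 <= x ord0 i <= 1].
Definition bdry (n : nat) : set 'rV[R]_n :=
  [set x | cube x /\ exists i, x ord0 i = 0 \/ x ord0 i = 1].
Definition cubeI (n : nat) : set ('rV[R]_n * R) := [set p | cube p.1 /\ 0 <= p.2 <= 1].

(* representatives of pi_n(|K|, b): maps (I^n, dI^n) -> (|K|, b) *)
Definition nloop (K : set {fset V}) (n : nat) (b : V -> R) (f : 'rV[R]_n -> V -> R) : Prop :=
  cont_into K (@cube n) f /\ forall x, bdry x -> f x = b.

Definition homot_rel (K : set {fset V}) (n : nat) (b : V -> R) (f g : 'rV[R]_n -> V -> R)
  : Prop :=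
  exists H : 'rV[R]_n * R -> V -> R,
    cont_into K (@cubeI n) H /\
    (forall x, cube x -> H (x, 0) = f x /\ H (x, 1) = g x) /\
    (forall x t, bdry x -> 0 <= t <= 1 -> H (x, t) = b).

(* The inclusion |L| -> |K| (L a subcomplex of K) is a weak equivalence:
   it induces a bijection on pi_0 and, for every n and every basepoint b in |L|,
   a bijection pi_n(|L|, b) -> pi_n(|K|, b)  (for n = 0, I^0 is a point with
   empty boundary, so pi_0 is the set of path components). *)
Definition incl_weak_equiv (L K : set {fset V}) : Prop :=
  (forall alpha, realization K alpha -> exists2 beta, realization L beta &
      homot_rel K beta (fun _ : 'rV[R]_0 => alpha) (fun _ => beta)) /\
  forall (n : nat) (b : V -> R), realization L b ->
    (forall f, nloop K b f -> exists2 g, nloop L (n := n) b g & homot_rel K b f g) /\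
    (forall f g : 'rV[R]_n -> V -> R, nloop L b f -> nloop L b g ->
        homot_rel K b f g -> homot_rel L b f g).

End Complexes.

(* A simplex of K meeting both X \ Y and Y \ X stays a simplex when aX and aY
   are added: K is clique, and each of its vertices spans an edge with aX and
   with aY, by (i) and (ii) for vertices in A and by (iii) applied to an edge
   crossing from X \ Y to Y \ X otherwise.  This gives the central simplex of
   St(sigma, A).
   The realization of K_X u K_Y is then a strong deformation retract of |K|.  In
   barycentric coordinates let m be the smaller of the masses a point carries
   on X \ Y and on Y \ X; removing mass m proportionally from each side and
   putting it on aX and on aY empties one side, and the straight-line homotopy
   stays in the simplex spanned by the support together with aX and aY.  It is
   continuous for the weak topology: it is Lipschitz on every closed simplex,
   and compactness of [0, 1] handles the time variable. *)

From HB Require Import structures.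
From mathcomp Require Import all_boot all_order all_algebra.
From mathcomp Require Import finmap.
From mathcomp Require Import all_classical all_reals all_analysis.
From mathcomp Require Import ring lra.
Import Order.TTheory GRing.Theory Num.Theory.
Import numFieldNormedType.Exports.
Set Implicit Arguments. Unset Strict Implicit. Unset Printing Implicit Defensive.
Local Open Scope classical_set_scope.
Local Open Scope ring_scope.

Section Complexes.
Variables (V : choiceType) (K : set {fset V}).
Hypothesis K_complex : is_complex K.

Lemma simplex_sub s t : K s -> fsubset t s -> t != fset0 -> K t.
Proof. exact: K_complex.2. Qed.

Lemma simplex_pair s u w : K s -> u \in s -> w \in s -> K [fset u; w]%fset.
Proof.
move=> Ks us ws; apply: simplex_sub Ks _ _.
  by apply/fsubsetP => z /fset2P[]->.
by apply/fset0Pn; exists u; rewrite fset21.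
Qed.

Lemma edge_pair s u w : K s -> u \in s -> w \in s -> u != w -> edge K [fset u; w]%fset.
Proof. by move=> Ks us ws uw; split; [exact: simplex_pair Ks us ws | rewrite cardfs2 uw]. Qed.

Lemma simplex_vertex s v : K s -> v \in s -> vertices K v.
Proof.
move=> Ks vs; apply: simplex_sub Ks _ _; first by rewrite fsub1set.
by apply/fset0Pn; exists v; rewrite fset11.
Qed.

Lemma full_sub_filter T (B : set V) : K T -> [fset v in T | `[< B v >]]%fset != fset0 ->
  full_sub K B [fset v in T | `[< B v >]]%fset.
Proof.
move=> KT ne; split; last by move=> v; rewrite !inE => /andP[_ /asboolP].
by apply: simplex_sub KT _ ne; apply/fsubsetP => v; rewrite !inE => /andP[].
Qed.

Lemma clique_simplex s : is_clique K -> (2 <= #|` s|)%N ->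
  (forall u w, u \in s -> w \in s -> K [fset u; w]%fset) -> K s.
Proof. by move=> K_clique s2 pairs; apply/(K_clique _ s2) => u w us ws _; exact: pairs. Qed.

End Complexes.

Lemma card_in_pair (V : choiceType) (B : set V) u w :
  B u -> ~ B w -> card_in [fset u; w]%fset B = 1%N.
Proof.
move=> Bu Bw; rewrite /card_in -(cardfs1 u); congr #|` _|.
apply/fsetP => z; rewrite !inE; apply/andP/eqP => [[/orP[]/eqP-> /asboolP]|->] //.
by rewrite eqxx; split => //; apply/asboolP.
Qed.

Section ClosedSimplex.
Variables (R : realType) (V : choiceType).
Implicit Types (a b : V -> R) (S T : {fset V}).

Lemma closed_simplex_ge0 S a : closed_simplex S a -> forall v, 0 <= a v.
Proof. by case=> _ []. Qed.

Lemma closed_simplex_out S a : closed_simplex S a -> forall v, v \notin S -> a v = 0.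
Proof. by case. Qed.

Lemma closed_simplex_sum S a : closed_simplex S a -> \sum_(v <- S) a v = 1.
Proof. by case=> _ []. Qed.

Lemma closed_simplex_neq0 S a : closed_simplex S a -> S != fset0.
Proof.
move=> /closed_simplex_sum; apply: contra_eqN => /eqP->.
by rewrite big_seq_fset0 eq_sym oner_eq0.
Qed.

Lemma eq_big_supported S T a (P : pred V) :
  (forall v, v \notin S -> a v = 0) -> (forall v, v \notin T -> a v = 0) ->
  \sum_(v <- S | P v) a v = \sum_(v <- T | P v) a v.
Proof.
have incl S' T' : (forall v, v \notin S' -> a v = 0) -> fsubset S' T' ->
    \sum_(v <- S' | P v) a v = \sum_(v <- T' | P v) a v.
  move=> aS' ST'; rewrite big_mkcond [RHS]big_mkcond /=.
  by apply: big_fset_incl => // v _ vS'; rewrite aS' // if_same.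
by move=> aS aT; rewrite (incl S (S `|` T)%fset aS (fsubsetUl S T)) (incl T _ aT (fsubsetUr S T)).
Qed.

Lemma ler_term_sum S (F : V -> R) (P : pred V) v :
  (forall w, 0 <= F w) -> v \in S -> P v -> F v <= \sum_(w <- S | P w) F w.
Proof.
move=> F0 vS Pv; rewrite big_mkcond /= (big_fsetD1 v) //= Pv lerDl.
by apply: sumr_ge0 => w _; case: ifP.
Qed.

Lemma closed_simplex_le1 S a v : closed_simplex S a -> a v <= 1.
Proof.
move=> aS; have [vS|vS] := boolP (v \in S); last by rewrite (closed_simplex_out aS vS) ler01.
by rewrite -(closed_simplex_sum aS) (ler_term_sum (P := predT) (closed_simplex_ge0 aS)).
Qed.

Lemma closed_simplex_restrict S T a : closed_simplex S a ->
  (forall v, v \notin T -> a v = 0) -> closed_simplex T a.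
Proof.
move=> aS aT; split=> //; split; first exact: closed_simplex_ge0 aS.
by rewrite -(closed_simplex_sum aS) (eq_big_supported predT aT (closed_simplex_out aS)).
Qed.

Lemma closed_simplex_filter T (B : set V) a : closed_simplex T a ->
  (forall v, v \in T -> ~ B v -> a v = 0) -> closed_simplex [fset v in T | `[< B v >]]%fset a.
Proof.
move=> aT aB; apply: (closed_simplex_restrict aT) => v.
have [vT|vT] := boolP (v \in T); last by rewrite (closed_simplex_out aT vT).
by rewrite !inE vT => /asboolPn; apply: aB.
Qed.

Lemma closed_simplex_conv T a b t : closed_simplex T a -> closed_simplex T b ->
  0 <= t <= 1 -> closed_simplex T (fun v => a v + t * (b v - a v)).
Proof.
move=> aT bT /andP[t0 t1]; split; last split.
- by move=> v vT; rewrite (closed_simplex_out aT vT) (closed_simplex_out bT vT) subrr mulr0 addr0.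
- move=> v; have := closed_simplex_ge0 aT v; have := closed_simplex_ge0 bT v => b0 a0.
  have -> : a v + t * (b v - a v) = (1 - t) * a v + t * b v by ring.
  by apply: addr_ge0; apply: mulr_ge0 => //; rewrite subr_ge0.
- rewrite big_split /= -mulr_sumr sumrB.
  by rewrite (closed_simplex_sum aT) (closed_simplex_sum bT) subrr mulr0 addr0.
Qed.

(* [fset0] when [a] has no finite support. *)
Definition fsupp a : {fset V} :=
  if pselect (exists S : {fset V}, forall v, v \notin S -> a v = 0) is left h
  then [fset v in projT1 (cid h) | a v != 0]%fset else fset0.

Definition mass (P : set V) a := \sum_(v <- fsupp a | `[< P v >]) a v.

Lemma massE S a P : closed_simplex S a -> mass P a = \sum_(v <- S | `[< P v >]) a v.
Proof.
move=> aS; apply: eq_big_supported (closed_simplex_out aS) => v.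
rewrite /fsupp; case: pselect => [h|[]]; last by exists S => w; exact: closed_simplex_out.
by case: (cid h) => S' aS' /=; rewrite !inE negb_and negbK => /orP[/aS'|/eqP].
Qed.

Section Mass.
Variables (S : {fset V}) (a : V -> R) (P : set V).
Hypothesis aS : closed_simplex S a.

Lemma mass_ge0 : 0 <= mass P a.
Proof. by rewrite (massE _ aS); apply: sumr_ge0 => v _; exact: (closed_simplex_ge0 aS v). Qed.

Lemma ler_mass v : P v -> a v <= mass P a.
Proof.
move=> Pv; have [vS|vS] := boolP (v \in S); last by rewrite (closed_simplex_out aS vS) mass_ge0.
rewrite (massE _ aS) (ler_term_sum (closed_simplex_ge0 aS) vS) //; exact/asboolP.
Qed.

Lemma mass_eq0 : mass P a = 0 -> forall v, P v -> a v = 0.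
Proof.
by move=> m0 v Pv; apply/eqP; rewrite eq_le (closed_simplex_ge0 aS) andbT -m0 ler_mass.
Qed.

Lemma mass_disjoint : (forall v, v \in S -> ~ P v) -> mass P a = 0.
Proof.
move=> noP; rewrite (massE _ aS) big1_seq // => v /andP[/asboolP Pv vS].
by case: (noP v vS).
Qed.

Lemma mass_neq0 : mass P a != 0 -> exists2 v, v \in S & P v.
Proof.
move=> /eqP m0; apply: contrapT => noP; apply/m0/mass_disjoint => v vS Pv.
by apply: noP; exists v.
Qed.

End Mass.

Definition l1dist S a b := \sum_(v <- S) `|b v - a v|.

Lemma l1dist_ge0 S a b : 0 <= l1dist S a b.
Proof. exact: sumr_ge0. Qed.

Section L1dist.
Variables (S : {fset V}) (a b : V -> R).
Hypotheses (aS : closed_simplex S a) (bS : closed_simplex S b).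

Lemma l1dist_coord v : `|b v - a v| <= l1dist S a b.
Proof.
have [vS|vS] := boolP (v \in S); first by rewrite (ler_term_sum (P := predT)).
by rewrite (closed_simplex_out aS vS) (closed_simplex_out bS vS) subrr normr0 l1dist_ge0.
Qed.

Lemma mass_lipschitz P : `|mass P b - mass P a| <= l1dist S a b.
Proof.
rewrite (massE _ aS) (massE _ bS) -sumrB; apply: le_trans (ler_norm_sum _ _ _) _.
by rewrite /l1dist big_mkcond; apply: ler_sum => v _; case: ifP.
Qed.

End L1dist.

Lemma l1dist_le S a b e : (forall v, v \in S -> `|b v - a v| < e) ->
  l1dist S a b <= #|` S|%:R * e.
Proof.
move=> close; rewrite /l1dist -sum1_size natr_sum mulr_suml big_seq [X in _ <= X]big_seq.
by apply: ler_sum => v vS; rewrite mul1r ltW // close.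
Qed.

Lemma l1dist_small S a (k e : R) : 0 < k -> 0 < e ->
  exists2 d, 0 < d & forall b, (forall v, v \in S -> `|b v - a v| < d) -> k * l1dist S a b < e.
Proof.
move=> k0 e0; set n : R := #|` S|%:R; have n0 : 0 <= n := ler0n _ _.
have kn0 : 0 < k * (n + 1) by rewrite mulr_gt0 // ltr_wpDl.
exists (e / (k * (n + 1))) => [|b close]; first exact: divr_gt0.
apply: le_lt_trans (ler_wpM2l (ltW k0) (l1dist_le close)) _.
have n1 : 0 < n + 1 by rewrite ltr_wpDl.
have -> : k * (n * (e / (k * (n + 1)))) = e * (n / (n + 1)).
  by field; rewrite !gt_eqF.
by rewrite -[X in _ < X]mulr1 ltr_pM2l // ltr_pdivrMr // mul1r ltrDl.
Qed.

End ClosedSimplex.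

Section RealInequalities.
Variable R : realType.
Implicit Types p s m d c x y z w : R.

Lemma ratio01 m s : 0 <= m -> m <= s -> 0 <= m / s <= 1.
Proof.
move=> m0 ms; have [->|s0] := eqVneq s 0; first by rewrite invr0 mulr0 lexx ler01.
have sp : 0 < s by rewrite lt_def s0 (le_trans m0 ms).
by rewrite divr_ge0 ?(ltW sp) //= ler_pdivrMr // mul1r.
Qed.

Lemma mul_ratio m s : 0 <= m -> m <= s -> s * (m / s) = m.
Proof.
move=> m0 ms; have [s0|s0] := eqVneq s 0; last by rewrite mulrCA divff // mulr1.
have -> : m = 0 by apply/eqP; rewrite eq_le m0 -s0 ms.
by rewrite mul0r mulr0.
Qed.

Lemma normrM_le01 c x : 0 <= c <= 1 -> `|c * x| <= `|x|.
Proof. by case/andP => c0 c1; rewrite normrM (ger0_norm c0) ler_piMl. Qed.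

Lemma min_lipschitz x y z w d : `|x - z| <= d -> `|y - w| <= d ->
  `|Num.min x y - Num.min z w| <= d.
Proof.
rewrite !ler_norml => /andP[h1 h2] /andP[h3 h4].
by case: (leP x y) => h5; case: (leP z w) => h6; apply/andP; split; lra.
Qed.

Lemma ratio_lipschitz p s m p' s' m' d :
  0 <= p <= s -> 0 <= m <= s -> 0 <= m' <= s' ->
  `|p' - p| <= d -> `|s' - s| <= d -> `|m' - m| <= d ->
  `|p' * (m' / s') - p * (m / s)| <= 3 * d.
Proof.
move=> /andP[p0 ps] /andP[m0 ms] /andP[m0' ms'] dp ds dm.
have d0 : 0 <= d := le_trans (normr_ge0 _) dp.
have q' := ratio01 m0' ms'.
have [s0|sn0] := eqVneq s 0.
  have p00 : p = 0 by apply/eqP; rewrite eq_le p0 -s0 ps.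
  rewrite p00 subr0 in dp; rewrite p00 mul0r subr0 mulrC.
  by apply: le_trans (normrM_le01 _ q') _; lra.
have sp : 0 < s by rewrite lt_def sn0 (le_trans p0 ps).
have split_diff q : s' * q = m' ->
    p' * q - p * (m / s) = q * (p' - p) + (p / s) * ((s - s') * q + (m' - m)).
  by move=> <-; field.
rewrite (split_diff _ (mul_ratio m0' ms')).
have ps1 := ratio01 p0 ps.
have h1 := le_trans (normrM_le01 _ q') dp.
have h2 : `|(s - s') * (m' / s')| <= d by rewrite mulrC (le_trans (normrM_le01 _ q')) // distrC.
have h3 := le_trans (normrM_le01 _ ps1) (ler_normD ((s - s') * (m' / s')) (m' - m)).
apply: le_trans (ler_normD _ _) _; lra.
Qed.

End RealInequalities.

Section Retraction.
Variables (R : realType) (V : choiceType) (X Y : set V) (aX aY : V).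
Implicit Types (a b : V -> R) (S T : {fset V}) (P : set V).

Definition excess a := Num.min (mass (X `\` Y) a) (mass (Y `\` X) a).

Definition shrink P a v := if `[< P v >] then a v * (excess a / mass P a) else 0.

Definition apex_mass a v :=
  (if v == aX then excess a else 0) + (if v == aY then excess a else 0).

(* Remove the mass [excess a] from each side [X `\` Y] and [Y `\` X]
   proportionally, and put it on [aX] and on [aY]: one side gets emptied. *)
Definition retract a v :=
  a v - shrink (X `\` Y) a v - shrink (Y `\` X) a v + apex_mass a v.

Definition deform a t v := a v + t * (retract a v - a v).

Lemma excess_ge0 S a : closed_simplex S a -> 0 <= excess a.
Proof. by move=> aS; rewrite le_min !(mass_ge0 _ aS). Qed.

Lemma excess_le_massXY a : excess a <= mass (X `\` Y) a.
Proof. by rewrite ge_min lexx. Qed.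

Lemma excess_le_massYX a : excess a <= mass (Y `\` X) a.
Proof. by rewrite ge_min lexx orbT. Qed.

Lemma excess_eq_mass a : excess a = mass (X `\` Y) a \/ excess a = mass (Y `\` X) a.
Proof. by rewrite /excess; case: leP; [left | right]. Qed.

Lemma shrink_out P a v : ~ P v -> shrink P a v = 0.
Proof. by move=> nPv; rewrite /shrink asboolF. Qed.

Lemma shrink_full S P a v : closed_simplex S a -> excess a = mass P a -> P v ->
  shrink P a v = a v.
Proof.
move=> aS em Pv; rewrite /shrink asboolT // em.
have [m0|m0] := eqVneq (mass P a) 0; last by rewrite divff // mulr1.
by rewrite (mass_eq0 aS m0 Pv) mul0r.
Qed.

Lemma shrink_le S P a v : closed_simplex S a -> excess a <= mass P a -> shrink P a v <= a v.
Proof.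
move=> aS em; rewrite /shrink; case: asboolP => _; last exact: closed_simplex_ge0 aS v.
case/andP: (ratio01 (excess_ge0 aS) em) => _ q1.
by rewrite ler_piMr // (closed_simplex_ge0 aS).
Qed.

Lemma sum_shrink S P a : closed_simplex S a -> excess a <= mass P a ->
  \sum_(v <- S) shrink P a v = excess a.
Proof.
move=> aS em; rewrite /shrink -big_mkcond /= -mulr_suml -(massE _ aS).
exact: mul_ratio (excess_ge0 aS) em.
Qed.

Lemma retract_id a : excess a = 0 -> retract a = a.
Proof.
move=> m0; apply/funext => v.
by rewrite /retract /apex_mass /shrink m0 !mul0r !mulr0 !if_same !subr0 !addr0.
Qed.

Lemma deform0 a : deform a 0 = a.
Proof. by apply/funext => v; rewrite /deform mul0r addr0. Qed.

Lemma deform1 a : deform a 1 = retract a.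
Proof. by apply/funext => v; rewrite /deform mul1r addrC subrK. Qed.

Lemma deform_id a t : retract a = a -> deform a t = a.
Proof. by move=> ra; apply/funext => v; rewrite /deform ra subrr mulr0 addr0. Qed.

Lemma retract_ge0 S a v : closed_simplex S a -> 0 <= retract a v.
Proof.
move=> aS; have m0 := excess_ge0 aS.
have apex0 : 0 <= apex_mass a v by apply: addr_ge0; case: ifP.
rewrite /retract; apply: addr_ge0 => //.
have [XYv|nXYv] := pselect ((X `\` Y) v).
  rewrite (@shrink_out (Y `\` X)) ?subr0; last by case: XYv => _ nYv [].
  by rewrite subr_ge0 (shrink_le _ aS) // excess_le_massXY.
by rewrite shrink_out // subr0 subr_ge0 (shrink_le _ aS) // excess_le_massYX.
Qed.

Lemma retract_closed_simplex T a : closed_simplex T a ->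
  (excess a != 0 -> aX \in T /\ aY \in T) -> closed_simplex T (retract a).
Proof.
move=> aT apexT; have [m0|/apexT[aXT aYT]] := eqVneq (excess a) 0; first by rewrite retract_id.
split; last split.
- move=> v vT; rewrite /retract /apex_mass /shrink (closed_simplex_out aT vT).
  have [e|_] := eqVneq v aX; first by rewrite e aXT in vT.
  have [e|_] := eqVneq v aY; first by rewrite e aYT in vT.
  by rewrite !mul0r !if_same !subr0 !addr0.
- by move=> v; apply: retract_ge0 aT.
- have sum_apex x : x \in T -> \sum_(v <- T) (if v == x then excess a else 0) = excess a.
    move=> xT; rewrite (big_fsetD1 x) //= eqxx big1_seq ?addr0 // => v /andP[_].
    by rewrite !inE => /andP[/negbTE->].
  rewrite /retract /apex_mass !big_split /= !sumrN (closed_simplex_sum aT).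
  rewrite !(sum_shrink aT) ?excess_le_massXY ?excess_le_massYX // !sum_apex //.
  ring.
Qed.

Lemma retract_side S a : (X `&` Y) aX -> (X `&` Y) aY -> closed_simplex S a ->
  (forall v, (Y `\` X) v -> retract a v = 0) \/ (forall v, (X `\` Y) v -> retract a v = 0).
Proof.
move=> [XaX YaX] [XaY YaY] aS.
have apex_out v : ~ X v \/ ~ Y v -> apex_mass a v = 0.
  move=> XYv; rewrite /apex_mass.
  by case: eqP => [e|_]; case: eqP => [e'|_]; rewrite ?addr0 //; case: XYv; rewrite ?e ?e'.
case: (excess_eq_mass a) => em; [right | left] => v [Pv nQv].
  have nYXv : ~ (Y `\` X) v by case.
  rewrite /retract (shrink_full aS em) // (shrink_out a nYXv) apex_out; last by right.
  by rewrite subrr subr0 addr0.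
have nXYv : ~ (X `\` Y) v by case.
rewrite /retract (shrink_full aS em) // (shrink_out a nXYv) apex_out; last by left.
by rewrite subr0 subrr addr0.
Qed.

Section Lipschitz.
Variables (S : {fset V}) (a b : V -> R).
Hypotheses (aS : closed_simplex S a) (bS : closed_simplex S b).

Lemma excess_lipschitz : `|excess b - excess a| <= l1dist S a b.
Proof. by apply: min_lipschitz; apply: mass_lipschitz. Qed.

Lemma shrink_lipschitz P v : excess a <= mass P a -> excess b <= mass P b ->
  `|shrink P b v - shrink P a v| <= 3 * l1dist S a b.
Proof.
move=> ea eb; rewrite /shrink; case: asboolP => Pv; last first.
  by rewrite subrr normr0 mulr_ge0 ?l1dist_ge0.
apply: ratio_lipschitz; rewrite ?excess_ge0 ?(ler_mass aS) ?l1dist_coord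
  ?mass_lipschitz ?excess_lipschitz ?(closed_simplex_ge0 aS) ?(excess_ge0 aS) ?(excess_ge0 bS) //.
Qed.

Lemma apex_mass_lipschitz v : `|apex_mass b v - apex_mass a v| <= 2 * l1dist S a b.
Proof.
have em := excess_lipschitz; have d0 := l1dist_ge0 S a b.
rewrite /apex_mass; case: eqP => _; case: eqP => _;
  rewrite ?add0r ?addr0 ?subrr ?oppr0 ?normr0 ?mulr_ge0 //; try lra.
have -> : excess b + excess b - (excess a + excess a) =
  (excess b - excess a) + (excess b - excess a) by ring.
by apply: le_trans (ler_normD _ _) _; lra.
Qed.

Lemma retract_lipschitz v : `|retract b v - retract a v| <= 9 * l1dist S a b.
Proof.
have -> : retract b v - retract a v = (b v - a v)
    - (shrink (X `\` Y) b v - shrink (X `\` Y) a v) - (shrink (Y `\` X) b v - shrink (Y `\` X) a v)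
    + (apex_mass b v - apex_mass a v) by rewrite /retract; ring.
have := l1dist_coord aS bS v; have := apex_mass_lipschitz v.
have := shrink_lipschitz v (excess_le_massXY a) (excess_le_massXY b).
have := shrink_lipschitz v (excess_le_massYX a) (excess_le_massYX b).
set d := b v - a v; set dXY := shrink (X `\` Y) b v - _.
set dYX := shrink (Y `\` X) b v - _; set dapex := apex_mass b v - _.
have := ler_normD (d - dXY - dYX) dapex; have := ler_normB (d - dXY) dYX.
have := ler_normB d dXY; lra.
Qed.

Lemma deform_lipschitz t v : 0 <= t <= 1 ->
  `|deform b t v - deform a t v| <= 10 * l1dist S a b.
Proof.
move=> t01; have /andP[t0 t1] := t01.
have t01' : 0 <= 1 - t <= 1 by apply/andP; split; lra.
have -> : deform b t v - deform a t v =
    (1 - t) * (b v - a v) + t * (retract b v - retract a v) by rewrite /deform; ring.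
apply: le_trans (ler_normD _ _) _.
have := normrM_le01 (b v - a v) t01'; have := normrM_le01 (retract b v - retract a v) t01.
have := l1dist_coord aS bS v; have := retract_lipschitz v; have := l1dist_ge0 S a b.
lra.
Qed.

End Lipschitz.

End Retraction.

Section WeakTopology.
Variables (R : realType) (V : choiceType).
Implicit Types (a p g : V -> R) (T : {fset V}).

Lemma weak_open_ball (M : set {fset V}) U T p : weak_open M U -> (T != fset0 -> M T) ->
  U p -> exists2 e : R, 0 < e &
    forall g, closed_simplex T g -> (forall v, `|g v - p v| < e) -> U g.
Proof.
move=> [UM Uo] MT Up.
have [pT|/existsNP[v /not_implyP[vT /eqP pv]]] := pselect (forall v, v \notin T -> p v = 0).
  have [S [_ pS]] := UM p Up; have pT' := closed_simplex_restrict pS pT.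
  have [e e0 Ue] := Uo T (MT (closed_simplex_neq0 pT')) p pT' Up.
  by exists e => // g gT close; apply: Ue gT _ => v _.
(* [p] is off [T], so no point of [T] is close to it. *)
exists `|p v|; first by rewrite normr_gt0.
by move=> g gT /(_ v); rewrite (closed_simplex_out gT vT) sub0r normrN ltxx.
Qed.

Lemma cont_into_const (T0 : topologicalType) (K : set {fset V}) (D : set T0) a :
  realization K a -> cont_into K D (fun _ => a).
Proof.
move=> Ka; split=> // U _; exists [set _ | U a]; split; last by apply/seteqP; split.
have [Ua|nUa] := pselect (U a).
  by rewrite (_ : [set _ : T0 | U a] = setT); [exact: openT | apply/seteqP; split].
by rewrite (_ : [set _ : T0 | U a] = set0); [exact: open0 | apply/seteqP; split].
Qed.

End WeakTopology.

Section TwoApexes.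
Variables (R : realType) (V : choiceType) (K : set {fset V}) (X Y : set V) (aX aY : V).
Hypotheses (K_complex : is_complex K) (K_clique : is_clique K)
  (XY_cover : X `|` Y = vertices K)
  (aX_A : (X `&` Y) aX) (aY_A : (X `&` Y) aY)
  (edge_aX : forall tau, edge K tau -> card_in tau (X `&` Y) = 1%N ->
     card_in tau (X `\` (X `&` Y)) = 1%N -> K (tau `|` [fset aX])%fset)
  (edge_aY : forall tau, edge K tau -> card_in tau (X `&` Y) = 1%N ->
     card_in tau (Y `\` (X `&` Y)) = 1%N -> K (tau `|` [fset aY])%fset)
  (edge_aXaY : forall tau, edge K tau -> ~ Pset K X Y tau ->
     K (tau `|` [fset aX; aY])%fset).

Lemma simplex_vertex_cover s v : K s -> v \in s -> X v \/ Y v.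
Proof. by move=> Ks /(simplex_vertex K_complex Ks); rewrite -XY_cover. Qed.

Lemma simplex_vertex_sides s v : K s -> v \in s ->
  [\/ (X `&` Y) v, (X `\` Y) v | (Y `\` X) v].
Proof.
move=> Ks vs; have [Xv|Yv] := simplex_vertex_cover Ks vs.
  by have [Yv|nYv] := pselect (Y v); [apply: Or31 | apply: Or32].
by have [Xv|nXv] := pselect (X v); [apply: Or31 | apply: Or33].
Qed.

Lemma outside_P_two_sided s : K s -> ~ Pset K X Y s ->
  (exists2 x, x \in s & (X `\` Y) x) /\ (exists2 y, y \in s & (Y `\` X) y).
Proof.
move=> Ks sP; split; apply: contrapT => no_side; apply: sP; split => //.
  right; left => v vs.
  case: (simplex_vertex_sides Ks vs) => [[_ Yv]|Xv|[Yv _]] //.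
  by case: no_side; exists v.
left => v vs; case: (simplex_vertex_sides Ks vs) => [[Xv _]|[Xv _]|Yv] //.
by case: no_side; exists v.
Qed.

Lemma link_apex (A B : set V) (a m w : V) :
  (forall tau, edge K tau -> card_in tau A = 1%N -> card_in tau B = 1%N ->
     K (tau `|` [fset a])%fset) ->
  A m -> ~ B m -> ~ A w -> B w -> K [fset m; w]%fset -> K [fset m; a]%fset.
Proof.
move=> apex Am nBm nAw Bw Kmw.
have mw : m != w by apply/eqP => emw; apply: nAw; rewrite -emw.
have Kmwa : K ([fset m; w] `|` [fset a])%fset.
  apply: apex (edge_pair K_complex Kmw (fset21 _ _) (fset22 _ _) mw) _ _.
    exact: card_in_pair.
  by rewrite [[fset m; w]%fset]fsetUC; exact: card_in_pair.
by apply: (simplex_pair K_complex Kmwa); rewrite !inE eqxx ?orbT.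
Qed.

Lemma cross_edge_link x y : K [fset x; y]%fset -> (X `\` Y) x -> (Y `\` X) y ->
  K ([fset x; y] `|` [fset aX; aY])%fset.
Proof.
move=> Kxy [Xx nYx] [Yy nXy]; have xy : x != y by apply/eqP => exy; apply: nXy; rewrite -exy.
apply: edge_aXaY; first exact: edge_pair Kxy (fset21 _ _) (fset22 _ _) xy.
case=> _ [subX|[subY|[c [/fset2P[]-> []//]]]].
  by apply: nXy; apply: subX; rewrite fset22.
by apply: nYx; apply: subY; rewrite fset21.
Qed.

Section TwoSided.
Variables (s : {fset V}) (x y : V).
Hypotheses (Ks : K s) (xs : x \in s) (Xx : (X `\` Y) x) (ys : y \in s) (Yy : (Y `\` X) y).

Lemma two_sided_apex_edge z c : z \in (s `|` [fset aX; aY])%fset ->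
  c \in [fset aX; aY]%fset -> K [fset z; c]%fset.
Proof.
move=> + cin; have apexes_in t : c \in (t `|` [fset aX; aY])%fset by rewrite inE cin orbT.
case/fsetUP => [zs|za]; last first.
  have Kxy := cross_edge_link (simplex_pair K_complex Ks xs ys) Xx Yy.
  by apply: (simplex_pair K_complex Kxy) (apexes_in _); rewrite inE za orbT.
case: (simplex_vertex_sides Ks zs) => [Az|Xz|Yz].
- have [Xx' nYx] := Xx; have [Yy' nXy] := Yy.
  case/fset2P: cin => ->.
    apply: (link_apex edge_aX Az (w := x)).
    + by case=> _ /(_ Az).
    + by case=> _ /nYx.
    + by split=> // -[_ /nYx].
    + exact: (simplex_pair K_complex Ks zs xs).
  apply: (link_apex edge_aY Az (w := y)).
  + by case=> _ /(_ Az).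
  + by case=> /nXy.
  + by split=> // -[/nXy].
  + exact: (simplex_pair K_complex Ks zs ys).
- have Kzy := cross_edge_link (simplex_pair K_complex Ks zs ys) Xz Yy.
  by apply: (simplex_pair K_complex Kzy) (apexes_in _); rewrite !inE eqxx.
- have Kxz := cross_edge_link (simplex_pair K_complex Ks xs zs) Xx Yz.
  by apply: (simplex_pair K_complex Kxz) (apexes_in _); rewrite !inE eqxx orbT.
Qed.

Lemma two_sided_extension : K (s `|` [fset aX; aY])%fset.
Proof.
apply: clique_simplex K_clique _ _.
  have xy : x != y by apply/eqP => exy; case: Yy => _; rewrite -exy; case: Xx.
  apply: leq_trans (fsubset_leq_card (_ : fsubset [fset x; y]%fset _)).
    by rewrite cardfs2 xy.
  by apply/fsubsetP => z /fset2P[]->; rewrite inE ?xs ?ys.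
move=> u w uin win.
have [ua|nua] := boolP (u \in [fset aX; aY]%fset).
  by rewrite fsetUC; exact: two_sided_apex_edge.
have [wa|nwa] := boolP (w \in [fset aX; aY]%fset); first exact: two_sided_apex_edge.
by apply: (simplex_pair K_complex Ks); [move: uin nua | move: win nwa];
  rewrite inE => /orP[] ->.
Qed.

End TwoSided.

Lemma central_St s : K s -> ~ Pset K X Y s ->
  central (St K s (X `&` Y)) [fset aX; aY]%fset.
Proof.
move=> Ks sP; have [sX sY] := outside_P_two_sided Ks sP.
have ext mu : K (mu `|` s)%fset -> K (mu `|` [fset aX; aY] `|` s)%fset.
  move=> Kmu; rewrite fsetUAC; case: sX => x xs Xx; case: sY => y ys Yy.
  by apply: (two_sided_extension Kmu _ Xx _ Yy); rewrite inE ?xs ?ys orbT.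
have aA : fsub_in [fset aX; aY]%fset (X `&` Y) by move=> z /fset2P[]->.
have ne mu : (mu `|` [fset aX; aY])%fset != fset0.
  by apply/fset0Pn; exists aX; rewrite !inE eqxx orbT.
split.
  split; first by have := ne fset0; rewrite fset0U.
  by split => //; have := ext fset0; rewrite !fset0U; apply.
move=> mu [_ [muA Kmu]]; split; first exact: ne.
by split; [move=> z /fsetUP[/muA|/aA] | exact: ext].
Qed.


Implicit Types (a b : V -> R) (S T : {fset V}) (U : set (V -> R)).
Notation L := (full_sub K X `|` full_sub K Y).
Notation retract := (retract X Y aX aY).
Notation deform := (deform X Y aX aY).

Definition apex_hull S : {fset V} :=
  if `[< (exists2 x, x \in S & (X `\` Y) x) /\ (exists2 y, y \in S & (Y `\` X) y) >]
  then (S `|` [fset aX; aY])%fset else S.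

Lemma apex_hull_simplex S : K S -> K (apex_hull S).
Proof.
move=> KS; rewrite /apex_hull; case: asboolP => [[[x xs Xx] [y ys Yy]]|//].
exact: (two_sided_extension KS xs Xx ys Yy).
Qed.

Lemma closed_simplex_apex_hull S a : closed_simplex S a -> closed_simplex (apex_hull S) a.
Proof.
move=> aS; apply: (closed_simplex_restrict aS) => v vS; apply: (closed_simplex_out aS).
by apply: contraNN vS; rewrite /apex_hull; case: ifP => // _; rewrite inE => ->.
Qed.

Lemma retract_apex_hull S a : closed_simplex S a -> closed_simplex (apex_hull S) (retract a).
Proof.
move=> aS; apply: retract_closed_simplex (closed_simplex_apex_hull aS) _ => m0.
have mass_pos P : excess X Y a <= mass P a -> mass P a != 0.
  by move=> em; apply: contraNneq m0 => mP0; rewrite eq_le (excess_ge0 _ _ aS) andbT -mP0.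
rewrite /apex_hull asboolT ?inE ?eqxx ?orbT //.
by split; apply: (mass_neq0 aS); apply: mass_pos;
  rewrite ?excess_le_massXY ?excess_le_massYX.
Qed.

Lemma deform_apex_hull S a t : closed_simplex S a -> 0 <= t <= 1 ->
  closed_simplex (apex_hull S) (deform a t).
Proof.
by move=> aS; apply: closed_simplex_conv (closed_simplex_apex_hull aS) (retract_apex_hull aS).
Qed.

Lemma deform_time_lipschitz S a t t' v : closed_simplex S a ->
  `|deform a t v - deform a t' v| <= `|t - t'|.
Proof.
move=> aS; have aT := closed_simplex_apex_hull aS; have rT := retract_apex_hull aS.
have -> : deform a t v - deform a t' v = (t - t') * (retract a v - a v) by rewrite /deform; ring.
rewrite normrM ler_piMr // ler_norml.
have := closed_simplex_ge0 aT v; have := closed_simplex_le1 v aT.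
have := closed_simplex_ge0 rT v; have := closed_simplex_le1 v rT.
by move=> *; apply/andP; split; lra.
Qed.

Lemma retract_side_simplex S a : K S -> closed_simplex S a ->
  closed_simplex [fset v in apex_hull S | `[< X v >]]%fset (retract a) \/
  closed_simplex [fset v in apex_hull S | `[< Y v >]]%fset (retract a).
Proof.
move=> KS aS; have KT := apex_hull_simplex KS; have rT := retract_apex_hull aS.
case: (retract_side aX_A aY_A aS) => [rYX|rXY]; [left | right];
  apply: (closed_simplex_filter rT) => v vT nBv; [apply: rYX | apply: rXY];
  by split=> //; case: (simplex_vertex_cover KT vT).
Qed.

Lemma apex_hull_side_L S (B : set V) : K S -> B = X \/ B = Y ->
  [fset v in apex_hull S | `[< B v >]]%fset != fset0 ->
  L [fset v in apex_hull S | `[< B v >]]%fset.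
Proof.
move=> /apex_hull_simplex KT [] -> /(full_sub_filter K_complex KT);
  by [left | right].
Qed.

Lemma retract_in_L a : realization K a -> realization L (retract a).
Proof.
case=> S [KS aS]; case: (retract_side_simplex KS aS) => rB;
  (eexists; split; last exact: rB); apply: (apex_hull_side_L KS) (closed_simplex_neq0 rB).
  by left.
by right.
Qed.

Lemma retract_on_L a : realization L a -> retract a = a.
Proof.
case=> S [KS aS]; apply: retract_id; apply/eqP; rewrite eq_le (excess_ge0 _ _ aS) andbT.
case: KS => -[_ SB].
  by rewrite -(mass_disjoint aS (P := Y `\` X)) ?excess_le_massYX // => v /SB Xv [].
by rewrite -(mass_disjoint aS (P := X `\` Y)) ?excess_le_massXY // => v /SB Yv [].
Qed.

Lemma retract_open U : weak_open L U -> weak_open K [set a | realization K a /\ U (retract a)].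
Proof.
move=> Uo; split=> [a []//|S KS a aS [_ Ua]].
have ball B : B = X \/ B = Y -> exists2 e : R, 0 < e & forall g,
    closed_simplex [fset v in apex_hull S | `[< B v >]]%fset g ->
    (forall v, `|g v - retract a v| < e) -> U g.
  by move=> XY; apply: weak_open_ball Uo (apex_hull_side_L KS XY) Ua.
have [eX eX0 UX] := ball X (or_introl erefl).
have [eY eY0 UY] := ball Y (or_intror erefl).
have e0 : 0 < Num.min eX eY by rewrite lt_min eX0 eY0.
have [d d0 close] := @l1dist_small _ _ S a 9 (Num.min eX eY) (ltr0n _ 9) e0.
exists d => // b bS bd; split; first by exists S.
have rclose v : `|retract b v - retract a v| < Num.min eX eY.
  exact: le_lt_trans (retract_lipschitz X Y aX aY aS bS v) (close b bd).
case: (retract_side_simplex KS bS) => rB; [apply: UX rB _ | apply: UY rB _] => v;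
  by apply: lt_le_trans (rclose v) _; rewrite ge_min lexx ?orbT.
Qed.

Lemma cont_into_retract (T0 : topologicalType) (D : set T0) (f : T0 -> V -> R) :
  cont_into K D f -> cont_into L D (fun t => retract (f t)).
Proof.
case=> fK fU; split=> [t Dt|U Uo]; first exact/retract_in_L/fK.
have [W [Wo WD]] := fU _ (retract_open Uo); exists W; split => //; rewrite WD.
by apply/seteqP; split => t [ft Dt]; split=> //; [case: ft | split=> //; exact: fK].
Qed.

Lemma deform_near U S a t : weak_open K U -> K S -> closed_simplex S a ->
  U (deform a t) -> exists2 e : R, 0 < e & forall b t', closed_simplex S b ->
    0 <= t' <= 1 -> `|t' - t| < e -> (forall v, v \in S -> `|b v - a v| < e) ->
    U (deform b t').
Proof.
move=> Uo KS aS Ut.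
have [e e0 Ue] := weak_open_ball Uo (fun _ => apex_hull_simplex KS) Ut.
have e20 : 0 < e / 2 by rewrite divr_gt0.
have [d d0 close] := @l1dist_small _ _ S a 10 (e / 2) (ltr0n _ 10) e20.
exists (Num.min d (e / 2)) => [|b t' bS t01 tt' bd]; first by rewrite lt_min d0 e20.
have md : Num.min d (e / 2) <= d by rewrite ge_min lexx.
have me : Num.min d (e / 2) <= e / 2 by rewrite ge_min lexx orbT.
apply: Ue (deform_apex_hull bS t01) _ => v.
have := deform_lipschitz X Y aX aY aS bS v t01; have := deform_time_lipschitz t' t v aS.
have := close b (fun w wS => lt_le_trans (bd w wS) md).
have := lt_le_trans tt' me.
have := ler_normD (deform b t' v - deform a t' v) (deform a t' v - deform a t v).
rewrite addrA subrK; lra.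
Qed.

Definition deform_tube U t0 d := [set a | realization K a /\
  forall t, 0 <= t <= 1 -> `|t - t0| <= d -> U (deform a t)].

Lemma deform_tube_mem U a t0 : weak_open K U -> realization K a -> U (deform a t0) ->
  exists2 d, 0 < d & deform_tube U t0 d a.
Proof.
move=> Uo [S [KS aS]] Ut0; have [e e0 Ue] := deform_near Uo KS aS Ut0.
exists (e / 2); first by rewrite divr_gt0.
split=> [|t t01 tt0]; first by exists S.
by apply: Ue aS t01 _ _ => [|v _]; [lra | rewrite subrr normr0].
Qed.

Lemma deform_tube_open U t0 d : weak_open K U -> weak_open K (deform_tube U t0 d).
Proof.
move=> Uo; split=> [a []//|S KS a aS [_ tube_a]].
set l := Num.max 0 (t0 - d); set u := Num.min 1 (t0 + d).
have inJ t : `[l, u]%classic t <-> 0 <= t <= 1 /\ `|t - t0| <= d.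
  rewrite /= in_itv /= /l /u ge_max le_min ler_norml; split.
    by case/andP => /andP[? ?] /andP[? ?]; split; apply/andP; split; lra.
  by case=> /andP[? ?] /andP[? ?]; apply/andP; split; apply/andP; split; lra.
pose good e t := forall b, closed_simplex S b ->
  (forall v, v \in S -> `|b v - a v| < e) -> 0 <= t <= 1 -> U (deform b t).
(* tube lemma over the compact time interval [[l, u]] *)
have : \forall e \near nbhs (0 : R), `[l, u]%classic `<=` good e.
  apply: ((compact_near_coveringP _).1 (@segment_compact R l u) R (nbhs (0 : R)) good
    (nbhs_filter _)) => t.
  move=> /inJ[t01 tt0]; have [e e0 Ue] := deform_near Uo KS aS (tube_a t t01 tt0).
  exists ([set t' | `|t - t'| < e], [set e' | `|0 - e'| < e]).
    by split; apply: nbhsx_ballx.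
  case=> t' e' /= [tt' e'e] b bS close t'01; apply: Ue => //; first by rewrite distrC.
  move=> v vS; apply: lt_trans (close v vS) _; apply: le_lt_trans e'e.
  by rewrite sub0r normrN ler_norm.
case/nbhs_ballP => r r0 J_good; have {}r0 : (0 : R) < r by exact: r0.
have r2 : `|(0 : R) - r / 2| < r by rewrite sub0r normrN gtr0_norm ?divr_gt0 //; lra.
exists (r / 2) => [|b bS close]; first by rewrite divr_gt0.
split=> [|t t01 tt0]; first by exists S.
exact: (J_good (r / 2) r2 t (proj2 (inJ t) (conj t01 tt0))).
Qed.

Lemma cont_into_deform n (f : 'rV[R]_n -> V -> R) : cont_into K (@cube R n) f ->
  cont_into K (@cubeI R n) (fun p => deform (f p.1) p.2).
Proof.
case=> fK fU; split=> [p [cx t01]|U Uo].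
  have [S [KS fS]] := fK _ cx; exists (apex_hull S).
  by split; [exact: apex_hull_simplex | exact: deform_apex_hull].
pose W := [set p : 'rV[R]_n * R | exists t0 d (W1 : set 'rV[R]_n),
  [/\ 0 < d, open W1, W1 `&` @cube R n = f @^-1` deform_tube U t0 d `&` @cube R n,
      W1 p.1 & `|p.2 - t0| < d]].
exists W; split.
  rewrite openE => p [t0 [d [W1 [d0 W1o W1f W1p tp]]]].
  suff : filter_prod (nbhs p.1) (nbhs p.2) W by [].
  exists (W1, [set s : R | `|s - t0| < d]); first split => /=.
      by apply: open_nbhs_nbhs; split.
    have dp : 0 < d - `|p.2 - t0| by lra.
    apply: (filterS _ (nbhsx_ballx p.2 _ dp)) => s; rewrite /ball /= => ps.
    have := ler_normD (s - p.2) (p.2 - t0); rewrite addrA subrK; rewrite distrC in ps; lra.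
  by case=> x s [/= W1x st0]; exists t0, d, W1; split.
apply/seteqP; split => [p [Wp Dp] | p [Up Dp]].
  case: Wp => t0 [d [W1 [d0 _ W1f W1p tp]]].
  have : (f @^-1` deform_tube U t0 d `&` @cube R n) p.1 by rewrite -W1f; split=> //; case: Dp.
  by case=> -[_ tube] _; split=> //; apply: tube; [case: Dp | exact: ltW].
have [d d0 tube] := deform_tube_mem Uo (fK _ Dp.1) Up.
have [W1 [W1o W1f]] := fU _ (deform_tube_open p.2 d Uo).
split=> //; exists p.2, d, W1; split=> //; last by rewrite subrr normr0.
have : (f @^-1` deform_tube U p.2 d `&` @cube R n) p.1 by split=> //; case: Dp.
by rewrite -W1f; case.
Qed.

Lemma full_sub_union_weak_equiv : incl_weak_equiv R L K.
Proof.
split=> [a Ka|n b Lb].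
  exists (retract a); first exact: retract_in_L.
  exists (fun p => deform a p.2); split; last split.
  - exact: (cont_into_deform (cont_into_const (@cube R 0) Ka)).
  - by move=> x _; rewrite deform0 deform1.
  - by move=> x t [_ [[] //]].
have retract_b := retract_on_L Lb.
split=> [f [fK fb]|f g [fL fb] [gL gb] [H [HK [H01 Hb]]]].
  exists (fun x => retract (f x)).
    by split=> [|x bx]; [exact: cont_into_retract | rewrite fb].
  exists (fun p => deform (f p.1) p.2); split; last split.
  - exact: cont_into_deform.
  - by move=> x _; rewrite deform0 deform1.
  - by move=> x t bx _; rewrite /= fb // deform_id.
exists (fun p => retract (H p)); split; last split.
- exact: cont_into_retract.
- move=> x cx; have [-> ->] := H01 x cx.
  by rewrite !retract_on_L //; [exact: gL.1 | exact: fL.1].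
- by move=> x t bx t01; rewrite /= Hb.
Qed.

End TwoApexes.

Theorem proposition9p6 (R : realType) (V : choiceType) (K : set {fset V})
    (X Y : set V) (aX aY : V) :
  is_complex K -> is_clique K ->
  X `|` Y = vertices K ->
  (X `&` Y) aX -> (X `&` Y) aY ->
  (forall tau, edge K tau -> card_in tau (X `&` Y) = 1%N ->
     card_in tau (X `\` (X `&` Y)) = 1%N -> K (fsetU tau [fset aX]%fset)) ->
  (forall tau, edge K tau -> card_in tau (X `&` Y) = 1%N ->
     card_in tau (Y `\` (X `&` Y)) = 1%N -> K (fsetU tau [fset aY]%fset)) ->
  (forall tau, edge K tau -> ~ Pset K X Y tau -> K (fsetU tau [fset aX; aY]%fset)) ->
  (forall sigma, K sigma -> ~ Pset K X Y sigma ->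
     central (St K sigma (X `&` Y)) [fset aX; aY]%fset) /\
  incl_weak_equiv R (full_sub K X `|` full_sub K Y) K.
Proof.
move=> K_complex K_clique XY_cover aX_A aY_A edge_aX edge_aY edge_aXaY; split.
  exact: central_St K_complex K_clique XY_cover aX_A aY_A edge_aX edge_aY edge_aXaY.
exact: full_sub_union_weak_equiv K_complex K_clique XY_cover aX_A aY_A
  edge_aX edge_aY edge_aXaY.
Qed.
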